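(* Consider a switched descriptor system $E_{\sigma(t)}\dot x=A_{\sigma(t)}x$, $\sigma(t)\in\{1,\dots,N\}$, with each $A_i$ nonsingular. For each $i$ let $C_i$ be a matrix such that $x\in\mathcal{C}(E_i,A_i)$ if and only if $C_ix=0$. Suppose there is a symmetric matrix $P$ such that for all $i=1,\dots,N$, $$P+C_i^TC_i>0,\qquad PA_i^{-1}E_i+E_i^TA_i^{-T}P-C_i^TC_i<0,$$ and that for every solution, $x(t_*^+)^TPx(t_*^+)\le x(t_*^-)^TPx(t_*^-)$ whenever $\sigma$ switches at $t_*$. Then the system is GUES.
   Context: For $E,A\in\mathbb{R}^{n\times n}$ with $A$ nonsingular, $(E,A)$ denotes the descriptor system $E\dot x=Ax$; its index is the smallest $k^*\ge0$ with $\mathrm{Im}((A^{-1}E)^{k^*+1})=\mathrm{Im}((A^{-1}E)^{k^*})$ and its consistency space is $\mathcal{C}(E,A)=\mathrm{Im}((A^{-1}E)^{k^*})$. Switched descriptor system: the switching signal $\sigma$ is piecewise constant with values in $\{1,\dots,N\}$ and finitely many discontinuities in every bounded interval. A solution is a function $x(\cdot)$ that is differentiable and satisfies $E_{\sigma(t)}\dot x(t)=A_{\sigma(t)}x(t)$ at every $t$ where $\sigma$ is continuous, and has one-sided limits $x(t_*^\pm)$ at each discontinuity $t_*$ of $\sigma$; the equation is not required at discontinuities, and the relation between $x(t_*^+)$ and $x(t_*^-)$ and the allowed switches are part of the system specification. The system is GUES if there exist $\beta,\alpha>0$ such that every solution satisfies $\|x(t)\|\le\beta e^{-\alpha(t-t_0)}\|x(t_0)\|$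 for all $t\ge t_0$. $M>0$ ($M<0$) means positive (negative) definite. *)

(* real analysis (derivatives, exp) over Stdlib Reals.
   Matrices are represented as functions nat -> nat -> R; only the entries
   with indices below the relevant dimension are meaningful. *)
From Stdlib Require Import Reals Lra List.
Open Scope R_scope.

Definition vec := nat -> R.
Definition mat := nat -> nat -> R.

Fixpoint rsum (n : nat) (f : nat -> R) : R :=
  match n with O => 0 | S k => rsum k f + f k end.

Definition idm : mat := fun i j => if Nat.eqb i j then 1 else 0.
Definition mulmv (n : nat) (M : mat) (v : vec) : vec :=
  fun i => rsum n (fun k => M i k * v k).
Definition mulmm (n : nat) (M N : mat) : mat :=
  fun i j => rsum n (fun k => M i k * N k j).
Definition tr (M : mat) : mat := fun i j => M j i.
Definition madd (M N : mat) : mat := fun i j => M i j + N i j.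
Definition msub (M N : mat) : mat := fun i j => M i j - N i j.
Definition mpow (n : nat) (M : mat) (k : nat) : mat := Nat.iter k (mulmm n M) idm.

Definition gram (m : nat) (C : mat) : mat :=
  fun j k => rsum m (fun r => C r j * C r k).

Definition quad (n : nat) (P : mat) (v : vec) : R :=
  rsum n (fun i => v i * rsum n (fun j => P i j * v j)).

Definition vnonzero (n : nat) (v : vec) : Prop := exists j, (j < n)%nat /\ v j <> 0.
Definition symmetric (n : nat) (P : mat) : Prop :=
  forall i j, (i < n)%nat -> (j < n)%nat -> P i j = P j i.
Definition posdef (n : nat) (P : mat) : Prop :=
  forall v, vnonzero n v -> 0 < quad n P v.
Definition negdef (n : nat) (P : mat) : Prop :=
  forall v, vnonzero n v -> quad n P v < 0.

Definition is_inverse (n : nat) (A B : mat) : Prop :=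
  forall i j, (i < n)%nat -> (j < n)%nat ->
    mulmm n A B i j = idm i j /\ mulmm n B A i j = idm i j.

Definition inIm (n : nat) (M : mat) (v : vec) : Prop :=
  exists y : vec, forall j, (j < n)%nat -> v j = mulmv n M y j.

Definition im_stable (n : nat) (M : mat) (k : nat) : Prop :=
  forall v, inIm n (mpow n M (S k)) v <-> inIm n (mpow n M k) v.

Definition is_index (n : nat) (M : mat) (k : nat) : Prop :=
  im_stable n M k /\ forall j, (j < k)%nat -> ~ im_stable n M j.

(* consistency space C(E,A) = Im((A^{-1}E)^{k*}), with M = A^{-1} E *)
Definition in_cons (n : nat) (M : mat) (v : vec) : Prop :=
  exists k, is_index n M k /\ inIm n (mpow n M k) v.

Definition euclid_norm (n : nat) (v : vec) : R := sqrt (rsum n (fun j => v j ^ 2)).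

Definition sigma_cont (sigma : R -> nat) (t : R) : Prop :=
  exists d, 0 < d /\ forall s, Rabs (s - t) < d -> sigma s = sigma t.

Definition right_lim (n : nat) (x : R -> vec) (t : R) (v : vec) : Prop :=
  forall j, (j < n)%nat -> forall eps, 0 < eps ->
    exists d, 0 < d /\ forall s, t < s < t + d -> Rabs (x s j - v j) < eps.

Definition left_lim (n : nat) (x : R -> vec) (t : R) (v : vec) : Prop :=
  forall j, (j < n)%nat -> forall eps, 0 < eps ->
    exists d, 0 < d /\ forall s, t - d < s < t -> Rabs (x s j - v j) < eps.

(* switching signal on [t0, oo): values in {1..N}, piecewise constant with
   finitely many discontinuities in every bounded interval *)
Definition switching_signal (N : nat) (t0 : R) (sigma : R -> nat) : Prop :=
  (forall t, t0 <= t -> (1 <= sigma t <= N)%nat) /\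
  (forall a b, exists l : list R,
     forall s u, t0 <= s -> t0 <= u -> a <= s <= b -> a <= u <= b ->
       (forall p, In p l -> ~ (Rmin s u <= p <= Rmax s u)) ->
       sigma s = sigma u).

Definition is_solution (n N : nat) (E A : nat -> mat) (t0 : R)
    (sigma : R -> nat) (x : R -> vec) : Prop :=
  switching_signal N t0 sigma /\
  (forall t, t0 < t -> sigma_cont sigma t ->
     exists dx : vec,
       (forall j, (j < n)%nat -> derivable_pt_lim (fun s => x s j) t (dx j)) /\
       (forall j, (j < n)%nat ->
          mulmv n (E (sigma t)) dx j = mulmv n (A (sigma t)) (x t) j)) /\
  (forall t, t0 < t -> exists v, left_lim n x t v) /\
  (forall t, t0 <= t -> right_lim n x t (x t)).

Definition jump_nonincreasing (n : nat) (P : mat) (t0 : R)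
    (sigma : R -> nat) (x : R -> vec) : Prop :=
  forall t, t0 < t -> ~ sigma_cont sigma t ->
    forall v, left_lim n x t v -> quad n P (x t) <= quad n P v.

(* Along a solution, V = x^T P x weighted by e^(alpha (t - t0)) is nonincreasing.
   Between switches the active mode gives x = M x' with M = A^-1 E, and a solution
   of such an equation stays in Im M^k for the index k (Fitting decomposition of M),
   i.e. in the consistency space; hence C x = C x' = 0 and
   V' = x'^T (P M + M^T P - C^T C) x' <= - c |x'|^2 <= - alpha V.  At switching
   instants V does not increase by assumption.  Finally P + C^T C > 0 makes
   V >= c |x|^2 on each consistency space, and x(t) lies in the consistency space
   of the mode active just after t. *)

From Stdlib Require Import Reals Lra Lia FunctionalExtensionality Classical ClassicalEpsilon.
From mathcomp Require all_boot all_algebra Rstruct.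
Open Scope R_scope.

Lemma rsum_ext n f g : (forall i, (i < n)%nat -> f i = g i) -> rsum n f = rsum n g.
Proof.
induction n as [|n IH]; intros H; simpl; [reflexivity|].
rewrite IH by (intros; apply H; lia). rewrite (H n) by lia. reflexivity.
Qed.

Lemma rsum_plus n f g : rsum n (fun i => f i + g i) = rsum n f + rsum n g.
Proof. induction n; simpl; [ring|rewrite IHn; ring]. Qed.

Lemma rsum_minus n f g : rsum n (fun i => f i - g i) = rsum n f - rsum n g.
Proof. induction n; simpl; [ring|rewrite IHn; ring]. Qed.

Lemma rsum_scal n c f : rsum n (fun i => c * f i) = c * rsum n f.
Proof. induction n; simpl; [ring|rewrite IHn; ring]. Qed.

Lemma rsum_eq0 n f : (forall i, (i < n)%nat -> f i = 0) -> rsum n f = 0.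
Proof.
induction n as [|n IH]; intros H; simpl; [reflexivity|].
rewrite IH by (intros; apply H; lia). rewrite (H n) by lia. ring.
Qed.

Lemma rsum_le n f g : (forall i, (i < n)%nat -> f i <= g i) -> rsum n f <= rsum n g.
Proof.
induction n as [|n IH]; intros H; simpl; [lra|].
apply Rplus_le_compat; [apply IH; intros; apply H|apply H]; lia.
Qed.

Lemma rsum_nonneg n f : (forall i, (i < n)%nat -> 0 <= f i) -> 0 <= rsum n f.
Proof.
intros H. rewrite <- (rsum_eq0 n (fun _ => 0)) by reflexivity. now apply rsum_le.
Qed.

Lemma rsum_term_le n f i :
  (forall j, (j < n)%nat -> 0 <= f j) -> (i < n)%nat -> f i <= rsum n f.
Proof.
induction n as [|n IH]; intros H hi; [lia|simpl].
assert (0 <= f n) by (apply H; lia).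
destruct (Nat.eq_dec i n) as [->|hne].
- assert (0 <= rsum n f) by (apply rsum_nonneg; intros; apply H; lia). lra.
- assert (f i <= rsum n f) by (apply IH; [intros; apply H|]; lia). lra.
Qed.

Definition sqnorm (n : nat) (v : vec) : R := rsum n (fun j => v j ^ 2).

Lemma sqnorm_nonneg n v : 0 <= sqnorm n v.
Proof. apply rsum_nonneg; intros; apply pow2_ge_0. Qed.

Lemma sq_le_sqnorm n v i : (i < n)%nat -> v i ^ 2 <= sqnorm n v.
Proof. apply (rsum_term_le n (fun j => v j ^ 2)); intros; apply pow2_ge_0. Qed.

Lemma sqnorm_eq0 n v : (forall j, (j < n)%nat -> v j = 0) -> sqnorm n v = 0.
Proof. intros H. apply rsum_eq0. intros j hj. rewrite H by exact hj. ring. Qed.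

Lemma quad_expand n Q v :
  quad n Q v = rsum n (fun i => rsum n (fun j => v i * Q i j * v j)).
Proof.
apply rsum_ext; intros i _. rewrite <- rsum_scal. apply rsum_ext; intros; ring.
Qed.

Lemma quad_ext n Q v w : (forall j, (j < n)%nat -> v j = w j) -> quad n Q v = quad n Q w.
Proof.
intros H. apply rsum_ext; intros i hi.
rewrite H by exact hi. f_equal. apply rsum_ext; intros j hj. now rewrite H.
Qed.

Lemma quad_zero n Q v : (forall j, (j < n)%nat -> v j = 0) -> quad n Q v = 0.
Proof. intros H. apply rsum_eq0. intros i hi. rewrite H by exact hi. ring. Qed.

Lemma quad_madd n Q R v : quad n (madd Q R) v = quad n Q v + quad n R v.
Proof.
unfold quad, madd. rewrite <- rsum_plus. apply rsum_ext; intros i _.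
rewrite <- Rmult_plus_distr_l, <- rsum_plus. f_equal. apply rsum_ext; intros; ring.
Qed.

Lemma quad_msub n Q R v : quad n (msub Q R) v = quad n Q v - quad n R v.
Proof.
unfold quad, msub. rewrite <- rsum_minus. apply rsum_ext; intros i _.
rewrite <- Rmult_minus_distr_l, <- rsum_minus. f_equal. apply rsum_ext; intros; ring.
Qed.

Lemma quad_rank_one n c b v :
  quad n (fun i j => c * (b i * b j)) v = c * rsum n (fun j => b j * v j) ^ 2.
Proof.
unfold quad.
rewrite (rsum_ext n _ (fun i => c * rsum n (fun j => b j * v j) * (b i * v i))).
- rewrite rsum_scal. ring.
- intros i _. rewrite (rsum_ext n _ (fun j => c * b i * (b j * v j))) by (intros; ring).
  rewrite rsum_scal. ring.
Qed.

Lemma quad_mext n Q R v :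
  (forall i j, (i < n)%nat -> (j < n)%nat -> Q i j = R i j) -> quad n Q v = quad n R v.
Proof.
intros H. apply rsum_ext; intros i hi. f_equal. apply rsum_ext; intros j hj. now rewrite H.
Qed.

Lemma quad_gram n m Cm v : quad n (gram m Cm) v = sqnorm m (mulmv n Cm v).
Proof.
induction m as [|m IH].
- apply rsum_eq0; intros i _. rewrite rsum_eq0 by (intros; unfold gram; simpl; ring). ring.
- rewrite (quad_mext n _ (madd (gram m Cm) (fun i j => 1 * (Cm m i * Cm m j))))
    by (intros; unfold gram, madd; simpl; ring).
  rewrite quad_madd, IH, quad_rank_one. unfold sqnorm, mulmv. simpl.
  ring.
Qed.

Lemma quad_le_sqnorm n Q : exists K, 0 < K /\ forall v, quad n Q v <= K * sqnorm n v.
Proof.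
set (S := rsum n (fun i => rsum n (fun j => Rabs (Q i j)))).
assert (HS : 0 <= S) by (apply rsum_nonneg; intros; apply rsum_nonneg; intros; apply Rabs_pos).
exists (S + 1). split; [lra|]. intros v.
assert (quad n Q v <= S * sqnorm n v).
{ rewrite quad_expand. unfold S. rewrite Rmult_comm, <- rsum_scal.
  apply rsum_le; intros i hi. rewrite <- rsum_scal. apply rsum_le; intros j hj.
  assert (Hij : Rabs (v i * v j) <= sqnorm n v).
  { pose proof (sq_le_sqnorm n v i hi). pose proof (sq_le_sqnorm n v j hj).
    pose proof (pow2_ge_0 (v i + v j)). pose proof (pow2_ge_0 (v i - v j)).
    apply Rabs_le. split; nra. }
  replace (v i * Q i j * v j) with (Q i j * (v i * v j)) by ring.
  eapply Rle_trans; [apply Rle_abs|]. rewrite Rabs_mult.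
  rewrite (Rmult_comm (sqnorm n v)). apply Rmult_le_compat_l; [apply Rabs_pos|exact Hij]. }
pose proof (sqnorm_nonneg n v). nra.
Qed.

Lemma linear_form_sq_le n b :
  exists B, 0 < B /\ forall v, rsum n (fun j => b j * v j) ^ 2 <= B * sqnorm n v.
Proof.
destruct (quad_le_sqnorm n (fun i j => 1 * (b i * b j))) as [B [HB H]].
exists B. split; [exact HB|]. intros v. specialize (H v).
rewrite quad_rank_one in H. lra.
Qed.

Definition border (n : nat) (Q : mat) (v : vec) : R :=
  rsum n (fun j => (Q j n + Q n j) * v j).

(* [schur n Q] is the Schur complement of the last diagonal entry of the
   symmetric part of the (n+1) x (n+1) matrix [Q]. *)
Definition schur (n : nat) (Q : mat) : mat :=
  msub Q (fun i j => / (4 * Q n n) * ((Q i n + Q n i) * (Q j n + Q n j))).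

Lemma quad_succ n Q v :
  quad (S n) Q v = quad n Q v + v n * border n Q v + Q n n * v n ^ 2.
Proof.
unfold quad at 1, border. simpl.
rewrite (rsum_ext n _ (fun i => v i * rsum n (fun j => Q i j * v j) + v n * (Q i n * v i)))
  by (intros; ring).
rewrite rsum_plus, rsum_scal.
rewrite (rsum_ext n (fun j => (Q j n + Q n j) * v j) (fun j => Q j n * v j + Q n j * v j))
  by (intros; ring).
rewrite rsum_plus. fold (quad n Q v). ring.
Qed.

Lemma quad_succ_schur n Q v : Q n n <> 0 ->
  quad (S n) Q v = quad n (schur n Q) v + Q n n * (v n + border n Q v / (2 * Q n n)) ^ 2.
Proof.
intros Hq. unfold schur. rewrite quad_succ, quad_msub, quad_rank_one. fold (border n Q v).
field. exact Hq.
Qed.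

Lemma posdef_last_pos n Q : posdef (S n) Q -> 0 < Q n n.
Proof.
intros HQ. set (e := fun j : nat => if Nat.eqb j n then 1 else 0).
assert (He : forall j, (j < n)%nat -> e j = 0)
  by (intros j hj; unfold e; destruct (Nat.eqb_spec j n); [lia|reflexivity]).
assert (Hen : e n = 1) by (unfold e; now rewrite Nat.eqb_refl).
assert (H : 0 < quad (S n) Q e) by (apply HQ; exists n; split; [lia|rewrite Hen; lra]).
rewrite quad_succ, quad_zero in H by exact He. unfold border in H.
rewrite rsum_eq0 in H by (intros j hj; rewrite He by exact hj; ring).
rewrite Hen in H. lra.
Qed.

Lemma posdef_schur n Q : posdef (S n) Q -> posdef n (schur n Q).
Proof.
intros HQ v [j [hj hvj]].
assert (Hq : 0 < Q n n) by exact (posdef_last_pos n Q HQ).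
set (w := fun k => if Nat.eqb k n then - border n Q v / (2 * Q n n) else v k).
assert (Hwv : forall k, (k < n)%nat -> w k = v k)
  by (intros k hk; unfold w; destruct (Nat.eqb_spec k n); [lia|reflexivity]).
assert (Hw : 0 < quad (S n) Q w)
  by (apply HQ; exists j; split; [lia|now rewrite Hwv]).
rewrite quad_succ_schur in Hw by lra.
rewrite (quad_ext n _ w v Hwv) in Hw.
unfold border in Hw. rewrite (rsum_ext n _ (fun k => (Q k n + Q n k) * v k)) in Hw
  by (intros k hk; now rewrite Hwv).
fold (border n Q v) in Hw. unfold w in Hw. rewrite Nat.eqb_refl in Hw.
replace (- border n Q v / (2 * Q n n) + border n Q v / (2 * Q n n)) with 0 in Hw
  by (field; lra).
lra.
Qed.

Lemma posdef_coercive n Q :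
  posdef n Q -> exists c, 0 < c /\ forall v, c * sqnorm n v <= quad n Q v.
Proof.
revert Q. induction n as [|n IH]; intros Q HQ.
- exists 1. split; [lra|]. intros v. unfold sqnorm, quad; simpl. lra.
- set (q := Q n n). assert (Hq : 0 < q) by exact (posdef_last_pos n Q HQ).
  destruct (IH _ (posdef_schur n Q HQ)) as [c [Hc Hcv]].
  destruct (linear_form_sq_le n (fun j => Q j n + Q n j)) as [B [HB HBv]].
  set (K := 2 + B / (2 * q ^ 2)).
  assert (HBq : 0 < B / (2 * q ^ 2)) by (apply Rdiv_lt_0_compat; nra).
  set (mu := Rmin c q). assert (Hmu : 0 < mu) by (apply Rmin_pos; lra).
  assert (Hmuc : mu <= c) by apply Rmin_l. assert (Hmuq : mu <= q) by apply Rmin_r.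
  exists (mu / K). split; [apply Rdiv_lt_0_compat; unfold K; lra|]. intros v.
  set (b := border n Q v). set (y := v n + b / (2 * q)).
  assert (Hquad : mu * (sqnorm n v + y ^ 2) <= quad (S n) Q v).
  { rewrite quad_succ_schur by (fold q; lra). fold q b y.
    pose proof (Hcv v).
    pose proof (sqnorm_nonneg n v). pose proof (pow2_ge_0 y).
    assert (mu * sqnorm n v <= c * sqnorm n v) by (apply Rmult_le_compat_r; lra).
    assert (mu * y ^ 2 <= q * y ^ 2) by (apply Rmult_le_compat_r; lra).
    lra. }
  assert (Hvn : v n ^ 2 <= 2 * y ^ 2 + B / (2 * q ^ 2) * sqnorm n v).
  { assert (Hb : b ^ 2 <= B * sqnorm n v) by exact (HBv v).
    assert (Hsplit : v n ^ 2 <= 2 * y ^ 2 + 2 * (b / (2 * q)) ^ 2).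
    { replace (v n) with (y - b / (2 * q)) by (unfold y; ring).
      pose proof (pow2_ge_0 (y + b / (2 * q))). nra. }
    replace (2 * (b / (2 * q)) ^ 2) with (/ (2 * q ^ 2) * b ^ 2) in Hsplit by (field; lra).
    assert (0 < / (2 * q ^ 2)) by (apply Rinv_0_lt_compat; nra).
    unfold Rdiv. nra. }
  assert (Hnorm : sqnorm (S n) v <= K * (sqnorm n v + y ^ 2)).
  { change (sqnorm (S n) v) with (sqnorm n v + v n ^ 2).
    pose proof (sqnorm_nonneg n v). pose proof (pow2_ge_0 y). unfold K. nra. }
  apply Rle_trans with (mu * (sqnorm n v + y ^ 2)); [|exact Hquad].
  unfold Rdiv. rewrite Rmult_assoc. apply Rmult_le_compat_l; [lra|].
  apply Rmult_le_reg_l with K; [unfold K; lra|].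
  replace (K * (/ K * sqnorm (S n) v)) with (sqnorm (S n) v) by (field; unfold K; lra).
  exact Hnorm.
Qed.

Lemma uniform_lower_const N (Pr : nat -> R -> Prop) :
  (forall i c c', 0 < c' <= c -> Pr i c -> Pr i c') ->
  (forall i, (1 <= i <= N)%nat -> exists c, 0 < c /\ Pr i c) ->
  exists c, 0 < c /\ forall i, (1 <= i <= N)%nat -> Pr i c.
Proof.
intros Hmono. induction N as [|N IH]; intros H.
- exists 1. split; [lra|]. intros; lia.
- destruct IH as [c [hc Hc]]; [intros; apply H; lia|].
  destruct (H (S N)) as [c' [hc' Hc']]; [lia|].
  assert (Hmin : 0 < Rmin c c') by (apply Rmin_pos; lra).
  exists (Rmin c c'). split; [exact Hmin|]. intros i hi.
  destruct (Nat.eq_dec i (S N)) as [->|hne].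
  + apply (Hmono _ c'); [split; [exact Hmin|apply Rmin_r]|exact Hc'].
  + apply (Hmono _ c); [split; [exact Hmin|apply Rmin_l]|apply Hc; lia].
Qed.

Lemma uniform_upper_const N (Pr : nat -> R -> Prop) :
  (forall i c c', c <= c' -> Pr i c -> Pr i c') ->
  (forall i, (1 <= i <= N)%nat -> exists c, 0 < c /\ Pr i c) ->
  exists c, 0 < c /\ forall i, (1 <= i <= N)%nat -> Pr i c.
Proof.
intros Hmono. induction N as [|N IH]; intros H.
- exists 1. split; [lra|]. intros; lia.
- destruct IH as [c [hc Hc]]; [intros; apply H; lia|].
  destruct (H (S N)) as [c' [hc' Hc']]; [lia|].
  exists (Rmax c c'). split; [eapply Rlt_le_trans; [exact hc|apply Rmax_l]|].
  intros i hi. destruct (Nat.eq_dec i (S N)) as [->|hne].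
  + apply (Hmono _ c'); [apply Rmax_r|exact Hc'].
  + apply (Hmono _ c); [apply Rmax_l|apply Hc; lia].
Qed.

Inductive side := Left | Right.

Definition near (sd : side) (t d s : R) : Prop :=
  match sd with Left => t - d < s < t | Right => t < s < t + d end.

Definition side_lim (sd : side) (t : R) (f : R -> R) (L : R) : Prop :=
  forall eps, 0 < eps -> exists d, 0 < d /\ forall s, near sd t d s -> Rabs (f s - L) < eps.

Definition eventually_near (sd : side) (t : R) (Pr : R -> Prop) : Prop :=
  exists d, 0 < d /\ forall s, near sd t d s -> Pr s.

Lemma near_mono sd t d1 d2 s : d1 <= d2 -> near sd t d1 s -> near sd t d2 s.
Proof. destruct sd; simpl; lra. Qed.

Lemma near_dist sd t d s : near sd t d s -> Rabs (s - t) < d.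
Proof. destruct sd; simpl; intros; apply Rabs_def1; lra. Qed.

Lemma near_inhabited sd t d : 0 < d -> exists s, near sd t d s.
Proof. intros. destruct sd; [exists (t - d / 2)|exists (t + d / 2)]; simpl; lra. Qed.

Lemma eventually_near_and sd t Pr Qr :
  eventually_near sd t Pr -> eventually_near sd t Qr -> eventually_near sd t (fun s => Pr s /\ Qr s).
Proof.
intros [d1 [hd1 H1]] [d2 [hd2 H2]]. exists (Rmin d1 d2). split; [now apply Rmin_pos|].
intros s hs. split.
- apply H1. exact (near_mono _ _ _ _ _ (Rmin_l d1 d2) hs).
- apply H2. exact (near_mono _ _ _ _ _ (Rmin_r d1 d2) hs).
Qed.

Lemma side_lim_const sd t c : side_lim sd t (fun _ => c) c.
Proof.
intros eps he. exists 1. split; [lra|]. intros. unfold Rminus. now rewrite Rplus_opp_r, Rabs_R0.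
Qed.

Lemma side_lim_plus sd t f g L M :
  side_lim sd t f L -> side_lim sd t g M -> side_lim sd t (fun s => f s + g s) (L + M).
Proof.
intros Hf Hg eps he.
destruct (eventually_near_and sd t _ _ (Hf (eps / 2) ltac:(lra)) (Hg (eps / 2) ltac:(lra)))
  as [d [hd H]].
exists d. split; [exact hd|]. intros s hs. destruct (H s hs) as [h1 h2].
replace (f s + g s - (L + M)) with ((f s - L) + (g s - M)) by ring.
eapply Rle_lt_trans; [apply Rabs_triang|]. lra.
Qed.

Lemma side_lim_mult sd t f g L M :
  side_lim sd t f L -> side_lim sd t g M -> side_lim sd t (fun s => f s * g s) (L * M).
Proof.
intros Hf Hg eps he.
pose proof (Rabs_pos L) as hL. pose proof (Rabs_pos M) as hM.
set (e1 := Rmin 1 (eps / (2 * (Rabs M + 1)))).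
set (e2 := eps / (2 * (Rabs L + 1))).
assert (he1 : 0 < e1) by (apply Rmin_pos; [lra|apply Rdiv_lt_0_compat; lra]).
assert (he1' : e1 <= 1) by apply Rmin_l.
assert (he1'' : e1 <= eps / (2 * (Rabs M + 1))) by apply Rmin_r.
assert (he2 : 0 < e2) by (apply Rdiv_lt_0_compat; lra).
destruct (eventually_near_and sd t _ _ (Hf e1 he1) (Hg e2 he2)) as [d [hd Hd]].
exists d. split; [exact hd|]. intros s hs. destruct (Hd s hs) as [h1 h2].
assert (hf : Rabs (f s) <= Rabs L + 1).
{ replace (f s) with (L + (f s - L)) by ring.
  eapply Rle_trans; [apply Rabs_triang|]. lra. }
assert (A1 : Rabs (f s) * Rabs (g s - M) < eps / 2).
{ apply Rle_lt_trans with ((Rabs L + 1) * Rabs (g s - M)).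
  - apply Rmult_le_compat_r; [apply Rabs_pos|exact hf].
  - replace (eps / 2) with ((Rabs L + 1) * e2) by (unfold e2; field; lra).
    apply Rmult_lt_compat_l; lra. }
assert (A2 : Rabs M * Rabs (f s - L) <= eps / 2).
{ replace (eps / 2) with ((Rabs M + 1) * (eps / (2 * (Rabs M + 1)))) by (field; lra).
  apply Rmult_le_compat; try apply Rabs_pos; lra. }
replace (f s * g s - L * M) with (f s * (g s - M) + M * (f s - L)) by ring.
eapply Rle_lt_trans; [apply Rabs_triang|]. rewrite !Rabs_mult. lra.
Qed.

Lemma side_lim_rsum sd t n (f : nat -> R -> R) (L : nat -> R) :
  (forall i, (i < n)%nat -> side_lim sd t (f i) (L i)) ->
  side_lim sd t (fun s => rsum n (fun i => f i s)) (rsum n L).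
Proof.
induction n as [|n IH]; intros H; simpl.
- apply side_lim_const.
- apply (side_lim_plus sd t (fun s => rsum n (fun i => f i s)) (f n));
    [apply IH; intros; apply H|apply H]; lia.
Qed.

Lemma side_lim_mulmv sd t n K (x : R -> vec) v r :
  (forall j, (j < n)%nat -> side_lim sd t (fun s => x s j) (v j)) ->
  side_lim sd t (fun s => mulmv n K (x s) r) (mulmv n K v r).
Proof.
intros H. apply (side_lim_rsum sd t n (fun k s => K r k * x s k)). intros k hk.
apply (side_lim_mult sd t (fun _ => K r k)); [apply side_lim_const|now apply H].
Qed.

Lemma side_lim_quad sd t n Q (x : R -> vec) v :
  (forall j, (j < n)%nat -> side_lim sd t (fun s => x s j) (v j)) ->
  side_lim sd t (fun s => quad n Q (x s)) (quad n Q v).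
Proof.
intros H. apply (side_lim_rsum sd t n (fun i s => x s i * mulmv n Q (x s) i)). intros i hi.
apply (side_lim_mult sd t (fun s => x s i)); [now apply H|now apply side_lim_mulmv].
Qed.

Lemma side_lim_continuous sd t f : continuity_pt f t -> side_lim sd t f (f t).
Proof.
intros Hc eps he. destruct (Hc eps he) as [d [hd H]].
exists d. split; [exact hd|]. intros s hs.
destruct (Req_dec s t) as [->|hne].
- unfold Rminus. now rewrite Rplus_opp_r, Rabs_R0.
- apply H. split; [split; [exact I|auto]|exact (near_dist sd t d s hs)].
Qed.

Lemma side_lim_le sd t f g L M :
  side_lim sd t f L -> side_lim sd t g M ->
  eventually_near sd t (fun s => f s <= g s) -> L <= M.
Proof.
intros Hf Hg Hle. destruct (Rle_or_lt L M) as [h|h]; [exact h|].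
set (eps := (L - M) / 2). assert (he : 0 < eps) by (unfold eps; lra).
destruct (eventually_near_and sd t _ _ Hle (eventually_near_and sd t _ _ (Hf eps he) (Hg eps he)))
  as [d [hd Hd]].
destruct (near_inhabited sd t d hd) as [s hs].
destruct (Hd s hs) as [hfg [h1 h2]].
apply Rabs_def2 in h1. apply Rabs_def2 in h2. unfold eps in *. lra.
Qed.

Lemma side_lim_unique sd t f L M : side_lim sd t f L -> side_lim sd t f M -> L = M.
Proof.
intros HL HM. assert (Hr : eventually_near sd t (fun s => f s <= f s))
  by (exists 1; split; [lra|intros; lra]).
apply Rle_antisym; [apply (side_lim_le sd t f f)|apply (side_lim_le sd t f f)]; assumption.
Qed.

Lemma side_lim_ext sd t f g L :
  eventually_near sd t (fun s => f s = g s) -> side_lim sd t f L -> side_lim sd t g L.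
Proof.
intros Hfg Hf eps he.
destruct (eventually_near_and sd t _ _ Hfg (Hf eps he)) as [d [hd Hd]].
exists d. split; [exact hd|]. intros s hs. destruct (Hd s hs) as [<- h]. exact h.
Qed.

Lemma right_lim_side n x t v : right_lim n x t v ->
  forall j, (j < n)%nat -> side_lim Right t (fun s => x s j) (v j).
Proof. intros H j hj eps he. exact (H j hj eps he). Qed.

Lemma left_lim_side n x t v : left_lim n x t v ->
  forall j, (j < n)%nat -> side_lim Left t (fun s => x s j) (v j).
Proof. intros H j hj eps he. exact (H j hj eps he). Qed.

Definition bil (n : nat) (Q : mat) (u w : vec) : R := rsum n (fun i => u i * mulmv n Q w i).

Lemma deriv_rsum n (f : nat -> R -> R) (f' : nat -> R) t :
  (forall i, (i < n)%nat -> derivable_pt_lim (f i) t (f' i)) ->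
  derivable_pt_lim (fun s => rsum n (fun i => f i s)) t (rsum n f').
Proof.
induction n as [|n IH]; intros H; simpl.
- apply derivable_pt_lim_const.
- apply (derivable_pt_lim_plus (fun s => rsum n (fun i => f i s)) (f n));
    [apply IH; intros; apply H|apply H]; lia.
Qed.

Lemma deriv_mulmv n K (x : R -> vec) dx t r :
  (forall j, (j < n)%nat -> derivable_pt_lim (fun s => x s j) t (dx j)) ->
  derivable_pt_lim (fun s => mulmv n K (x s) r) t (mulmv n K dx r).
Proof.
intros H. apply (deriv_rsum n (fun k s => K r k * x s k)). intros k hk.
apply (derivable_pt_lim_scal (fun s => x s k)). now apply H.
Qed.

Lemma deriv_quad n Q (x : R -> vec) dx t :
  (forall j, (j < n)%nat -> derivable_pt_lim (fun s => x s j) t (dx j)) ->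
  derivable_pt_lim (fun s => quad n Q (x s)) t (bil n Q dx (x t) + bil n Q (x t) dx).
Proof.
intros H. unfold bil. rewrite <- rsum_plus.
apply (deriv_rsum n (fun i s => x s i * mulmv n Q (x s) i)). intros i hi.
apply (derivable_pt_lim_mult (fun s => x s i) (fun s => mulmv n Q (x s) i));
  [now apply H|now apply deriv_mulmv].
Qed.

Lemma deriv_exp_affine al t0 t :
  derivable_pt_lim (fun s => exp (al * (s - t0))) t (al * exp (al * (t - t0))).
Proof.
rewrite Rmult_comm.
apply (derivable_pt_lim_comp (fun s => al * (s - t0)) exp); [|apply derivable_pt_lim_exp].
assert (H : derivable_pt_lim (mult_real_fct al (minus_fct id (fct_cte t0))) t (al * (1 - 0))).
{ apply derivable_pt_lim_scal, derivable_pt_lim_minus;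
    [apply derivable_pt_lim_id|apply derivable_pt_lim_const]. }
rewrite Rminus_0_r, Rmult_1_r in H. exact H.
Qed.

Lemma deriv_zero_on (f : R -> R) a b t l :
  (forall s, a < s < b -> f s = 0) -> a < t < b -> derivable_pt_lim f t l -> l = 0.
Proof.
intros H ht hd. apply (uniqueness_limite f t); [exact hd|].
intros eps heps.
assert (hd0 : 0 < Rmin (t - a) (b - t)) by (apply Rmin_pos; lra).
exists (mkposreal _ hd0). intros h hh hlt; simpl in hlt.
pose proof (Rmin_l (t - a) (b - t)). pose proof (Rmin_r (t - a) (b - t)).
apply Rabs_def2 in hlt.
rewrite (H (t + h)), (H t) by lra.
replace ((0 - 0) / h - 0) with 0 by (field; exact hh). now rewrite Rabs_R0.
Qed.

Module RowMatrix.
Import all_boot all_algebra Rstruct.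
Import GRing.Theory.
Local Open Scope ring_scope.

Section StablePower.
Context {F : fieldType} {n k : nat} {B : 'M[F]_n}.
Hypothesis stable : (B ^+ k <= B ^+ k.+1)%MS.

Lemma stable_pow_sub j : (B ^+ k <= B ^+ (k + j))%MS.
Proof.
elim: j => [|j IH]; first by rewrite addn0.
apply: (submx_trans IH).
by rewrite addnS exprD -addSn exprD -!mulmxE submxMr.
Qed.

Lemma stable_pow_proj : exists D : 'M_n, B ^+ k = D *m B ^+ (k + k).
Proof. exact/submxP/stable_pow_sub. Qed.

Lemma stable_pow_ker m (U : 'M_(m, n)) : U *m B ^+ (k + k) = 0 -> U *m B ^+ k = 0.
Proof.
have sub_kk : (B ^+ (k + k) <= B ^+ k)%MS by rewrite exprD -mulmxE mulmx_sub.
have rank_kk : \rank (B ^+ (k + k)) = \rank (B ^+ k).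
  by apply/eqP; rewrite eqn_leq !mxrankS // stable_pow_sub.
have ker_sub : (kermx (B ^+ k) <= kermx (B ^+ (k + k)))%MS.
  by apply/sub_kermxP; rewrite exprD -mulmxE mulmxA mulmx_ker mul0mx.
have ker_eq : (kermx (B ^+ (k + k)) <= kermx (B ^+ k))%MS.
  by have [_ <-] := mxrank_leqif_sup ker_sub; rewrite !mxrank_ker rank_kk.
by move=> /sub_kermxP U_ker; apply/sub_kermxP/(submx_trans U_ker).
Qed.

End StablePower.

Definition has_rderiv {n} (X : R -> 'rV[R]_n) (t : R) (dX : 'rV[R]_n) : Prop :=
  forall j, derivable_pt_lim (fun s => X s 0 j) t (dX 0 j).

Lemma deriv_big (I : Type) (r : seq I) (f : I -> R -> R) (f' : I -> R) t :
  (forall i, derivable_pt_lim (f i) t (f' i)) ->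
  derivable_pt_lim (fun s => \sum_(i <- r) f i s) t (\sum_(i <- r) f' i).
Proof.
move=> df; elim: r => [|i r IH].
  rewrite big_nil.
  have -> : (fun s => \sum_(i <- [::]) f i s) = fct_cte 0.
    by apply: functional_extensionality => s; rewrite big_nil.
  exact: derivable_pt_lim_const.
rewrite big_cons.
have -> : (fun s => \sum_(j <- i :: r) f j s) = plus_fct (f i) (fun s => \sum_(j <- r) f j s).
  by apply: functional_extensionality => s; rewrite big_cons.
exact: derivable_pt_lim_plus.
Qed.

Lemma has_rderiv_mulmx n p (K : 'M[R]_(n, p)) (X : R -> 'rV_n) t dX :
  has_rderiv X t dX -> has_rderiv (fun s => X s *m K) t (dX *m K).
Proof.
move=> dXP j; rewrite mxE.
have -> : (fun s => (X s *m K) 0 j) = (fun s => \sum_i X s 0 i * K i j).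
  by apply: functional_extensionality => s; rewrite mxE.
apply: deriv_big => i.
have -> : (fun s => X s 0 i * K i j) = mult_real_fct (K i j) (fun s => X s 0 i).
  by apply: functional_extensionality => s; rewrite mulrC.
by rewrite mulrC; apply: derivable_pt_lim_scal.
Qed.

Section Solutions.
Variables (n : nat) (B : 'M[R]_n) (a b : R).

Definition rsolution (X : R -> 'rV[R]_n) : Prop :=
  forall s, Rlt a s -> Rlt s b -> exists dX, has_rderiv X s dX /\ X s = dX *m B.

Lemma rsolution_ker_descent {j Z} : rsolution Z ->
  (forall s, Rlt a s -> Rlt s b -> Z s *m B ^+ j.+1 = 0) ->
  forall s, Rlt a s -> Rlt s b -> Z s *m B ^+ j = 0.
Proof.
move=> solZ Zker s ha hb; have [dZ [dZP Zs]] := solZ s ha hb.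
rewrite Zs -mulmxA mulmxE -exprS; apply/matrixP => i l; rewrite (ord1 i) [RHS]mxE.
apply: (deriv_zero_on (fun s => (Z s *m B ^+ j.+1) 0 l) a b s) => [s' [ha' hb']||].
- by rewrite Zker // mxE.
- by split.
- exact: has_rderiv_mulmx.
Qed.

Lemma rsolution_ker_zero {j Z} : rsolution Z ->
  (forall s, Rlt a s -> Rlt s b -> Z s *m B ^+ j = 0) ->
  forall s, Rlt a s -> Rlt s b -> Z s = 0.
Proof.
move=> solZ; elim: j => [|j IH] Zker; first by move=> s ha hb; rewrite -(Zker s) // mulmx1.
by apply: IH; apply: rsolution_ker_descent.
Qed.

Lemma rsolution_in_stable_image k X : (B ^+ k <= B ^+ k.+1)%MS -> rsolution X ->
  forall s, Rlt a s -> Rlt s b -> (X s <= B ^+ k)%MS.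
Proof.
move=> stable solX s ha hb.
have powD i j : B ^+ i *m B ^+ j = B ^+ (i + j) by rewrite mulmxE exprD.
have powSl j : B *m B ^+ j = B ^+ j.+1 by rewrite mulmxE exprS.
have powSr j : B ^+ j *m B = B ^+ j.+1 by rewrite mulmxE exprSr.
have [D BkD] := stable_pow_proj stable.
(* [D *m B ^+ k] is the spectral projection onto the image of [B ^+ k] along its kernel. *)
have proj_fix : D *m B ^+ k *m B ^+ k = B ^+ k by rewrite -mulmxA powD -BkD.
have proj_comm : D *m B ^+ k *m B = B *m (D *m B ^+ k).
  apply/eqP; rewrite -subr_eq0; apply/eqP.
  have -> : D *m B ^+ k *m B - B *m (D *m B ^+ k) = (D *m B - B *m D) *m B ^+ k.
    by rewrite mulmxBl -!mulmxA powSl powSr.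
  apply: (stable_pow_ker stable).
  by rewrite mulmxBl -!mulmxA powSl -powSr !mulmxA -BkD -mulmxA -BkD powSr powSl subrr.
pose Z s := X s *m (1%:M - D *m B ^+ k).
have solZ : rsolution Z.
  move=> s' ha' hb'; have [dX [dXP Xs]] := solX s' ha' hb'.
  exists (dX *m (1%:M - D *m B ^+ k)); split; first exact: has_rderiv_mulmx.
  by rewrite /Z Xs -!mulmxA mulmxBl mulmxBr mul1mx mulmx1 proj_comm.
have Zker s' : Rlt a s' -> Rlt s' b -> Z s' *m B ^+ k = 0.
  by move=> _ _; rewrite /Z -mulmxA mulmxBl mul1mx proj_fix subrr mulmx0.
have := rsolution_ker_zero solZ Zker s ha hb.
rewrite /Z mulmxBr mulmx1 => /eqP; rewrite subr_eq0 => /eqP ->.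
by rewrite mulmxA submxMl.
Qed.
End Solutions.

(* Vectors become row vectors and [M] acts on them on the right, so that the
   image of [M] is the row space of [rowmx n M]. *)
Definition rowv n (v : vec) : 'rV[R]_n := \row_j v j.
Definition rowmx n (M : mat) : 'M[R]_n := \matrix_(i, j) M j i.
Definition vec_of_row {n} (y : 'rV[R]_n) : vec :=
  fun j => oapp (fun i : 'I_n => y 0 i) 0 (insub j).

Lemma rowvK {n} (y : 'rV[R]_n) : rowv n (vec_of_row y) = y.
Proof. by apply/rowP => i; rewrite !mxE /vec_of_row valK. Qed.

Lemma rowv_eqP n v w : (forall j, lt j n -> v j = w j) <-> rowv n v = rowv n w.
Proof.
split=> [vw|/rowP vw j /ltP jn]; first by apply/rowP => i; rewrite !mxE vw //; apply/ltP.
by have := vw (Ordinal jn); rewrite !mxE.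
Qed.

Lemma rsum_big n f : rsum n f = \sum_(i < n) f i.
Proof. by elim: n => [|n IH]; rewrite ?big_ord0 // big_ord_recr /= IH. Qed.

Lemma rowv_mulmv n M v : rowv n (mulmv n M v) = rowv n v *m rowmx n M.
Proof.
apply/rowP => j; rewrite !mxE /mulmv rsum_big.
by apply: eq_bigr => i _; rewrite !mxE mulrC.
Qed.

Lemma rowmx_mulmm n A B : rowmx n (mulmm n A B) = rowmx n B *m rowmx n A.
Proof.
apply/matrixP => i j; rewrite !mxE /mulmm rsum_big.
by apply: eq_bigr => l _; rewrite !mxE mulrC.
Qed.

Lemma rowmx_idm n : rowmx n idm = 1%:M.
Proof.
apply/matrixP => i j; rewrite !mxE /idm.
have [->|ij] := eqVneq j i; first by rewrite Nat.eqb_refl.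
by case: (Nat.eqb_spec j i) => // /val_inj ji; case/eqP: ij.
Qed.

Lemma rowmx_mpow n M k : rowmx n (mpow n M k) = rowmx n M ^+ k.
Proof.
elim: k => [|k IH]; first by rewrite expr0 rowmx_idm.
by rewrite /mpow /= -/(mpow n M k) rowmx_mulmm IH mulmxE exprSr.
Qed.

Lemma rowmx_tr n M : rowmx n (tr M) = (rowmx n M)^T.
Proof. by apply/matrixP => i j; rewrite !mxE. Qed.

Lemma rowmx_madd n A B : rowmx n (madd A B) = rowmx n A + rowmx n B.
Proof. by apply/matrixP => i j; rewrite !mxE. Qed.

Lemma inIm_submx n M v : inIm n M v <-> (rowv n v <= rowmx n M)%MS.
Proof.
split=> [[y /rowv_eqP vMy]|/submxP [y vMy]].
  by apply/submxP; exists (rowv n y); rewrite vMy rowv_mulmv.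
by exists (vec_of_row y); apply/rowv_eqP; rewrite rowv_mulmv rowvK.
Qed.

Lemma bil_rowmx n Q u w : bil n Q u w = (rowv n w *m rowmx n Q *m (rowv n u)^T) 0 0.
Proof.
rewrite /bil rsum_big !mxE; apply: eq_bigr => i _.
by rewrite -rowv_mulmv !mxE mulrC.
Qed.

Lemma mulmv_inverse n A Ainv E (x dx : vec) : is_inverse n A Ainv ->
  (forall j, lt j n -> mulmv n E dx j = mulmv n A x j) ->
  forall j, lt j n -> x j = mulmv n (mulmm n Ainv E) dx j.
Proof.
move=> inv /rowv_eqP Edx; apply/rowv_eqP.
have AAinv : rowmx n A *m rowmx n Ainv = 1%:M.
  rewrite -rowmx_mulmm -rowmx_idm; apply/matrixP => i j; rewrite !mxE.
  by case: (inv j i (elimT ltP (ltn_ord j)) (elimT ltP (ltn_ord i))).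
by rewrite rowv_mulmv rowmx_mulmm mulmxA -rowv_mulmv Edx rowv_mulmv -mulmxA AAinv mulmx1.
Qed.

Lemma bil_solution n Q M (x dx : vec) : (forall j, lt j n -> x j = mulmv n M dx j) ->
  Rplus (bil n Q dx x) (bil n Q x dx) = quad n (madd (mulmm n Q M) (mulmm n (tr M) Q)) dx.
Proof.
move/rowv_eqP; rewrite rowv_mulmv => xM.
rewrite /quad -/(bil n _ dx dx) !bil_rowmx xM rowmx_madd !rowmx_mulmm rowmx_tr.
by rewrite trmx_mul mulmxDr mulmxDl [in RHS]mxE !mulmxA.
Qed.

Lemma solution_in_image n M k a b (x : R -> vec) : im_stable n M k ->
  (forall s, Rlt a s /\ Rlt s b -> exists dx : vec,
     (forall j, lt j n -> derivable_pt_lim (fun s => x s j) s (dx j)) /\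
     (forall j, lt j n -> x s j = mulmv n M dx j)) ->
  forall s, Rlt a s /\ Rlt s b -> inIm n (mpow n M k) (x s).
Proof.
move=> stable sol s hs; apply/inIm_submx; rewrite rowmx_mpow.
have rowstable : (rowmx n M ^+ k <= rowmx n M ^+ k.+1)%MS.
  apply/row_subP => i; rewrite -(rowvK (row i _)) -!rowmx_mpow -inIm_submx.
  by apply/stable/inIm_submx; rewrite rowvK row_sub.
apply: (@rsolution_in_stable_image _ _ a b k (fun s => rowv n (x s))) hs.1 hs.2 => //.
move=> s' ha hb; have [dx [dxP xM]] := sol s' (conj ha hb).
exists (rowv n dx); split; last by rewrite -rowv_mulmv; apply/rowv_eqP.
move=> j; rewrite mxE.
have -> : (fun s => rowv n (x s) 0 j) = (fun s => x s j).
  by apply: functional_extensionality => t; rewrite mxE.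
by apply: dxP; apply/ltP.
Qed.
End RowMatrix.

Lemma side_lim_le_of_deriv_nonpos (f : R -> R) a b L : a < b ->
  (forall s, a < s < b -> exists w, derivable_pt_lim f s w /\ w <= 0) ->
  side_lim Right a f (f a) -> side_lim Left b f L -> L <= f a.
Proof.
intros hab df fa fb.
assert (mono : forall s1 s2, a < s1 -> s1 < s2 -> s2 < b -> f s2 <= f s1).
{ intros s1 s2 h1 h2 h3.
  set (f' := fun s => epsilon (inhabits 0) (fun w => derivable_pt_lim f s w /\ w <= 0)).
  assert (f'P : forall s, a < s < b -> derivable_pt_lim f s (f' s) /\ f' s <= 0)
    by (intros s hs; apply epsilon_spec, df, hs).
  destruct (MVT_cor2 f f' s1 s2 h2) as [c [Hc hc]]; [intros c hc; apply f'P; lra|].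
  destruct (f'P c) as [_ hle]; [lra|].
  assert (f' c * (s2 - s1) <= 0) by (assert (0 < s2 - s1) by lra; nra). lra. }
assert (below_a : forall s, a < s < b -> f s <= f a).
{ intros s hs. apply (side_lim_le Right a (fun _ => f s) f); [apply side_lim_const|exact fa|].
  exists (s - a). split; [lra|]. intros s' hs'. simpl in hs'.
  destruct (Req_dec s' s) as [->|hne]; [lra|]. apply mono; lra. }
apply (side_lim_le Left b f (fun _ => f a)); [exact fb|apply side_lim_const|].
exists (b - a). split; [lra|]. intros s hs. simpl in hs. apply below_a. lra.
Qed.

Definition lyap_mat (n : nat) (P M Cm : mat) (m : nat) : mat :=
  msub (madd (mulmm n P M) (mulmm n (tr M) P)) (gram m Cm).

Lemma weighted_lyap_deriv_nonpos n P M Cm mC (x : R -> vec) dx t t0 c2 KP KM :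
  0 < c2 -> 0 < KP -> 0 < KM ->
  (forall v, quad n (lyap_mat n P M Cm mC) v <= - c2 * sqnorm n v) ->
  (forall v, quad n P v <= KP * sqnorm n v) ->
  (forall v, sqnorm n (mulmv n M v) <= KM * sqnorm n v) ->
  (forall j, (j < n)%nat -> derivable_pt_lim (fun s => x s j) t (dx j)) ->
  (forall j, (j < n)%nat -> x t j = mulmv n M dx j) ->
  (forall r, (r < mC)%nat -> mulmv n Cm dx r = 0) ->
  exists w, derivable_pt_lim (fun s => exp (c2 / (KP * KM) * (s - t0)) * quad n P (x s)) t w
    /\ w <= 0.
Proof.
intros hc2 hKP hKM lyap_le P_le M_le dx_deriv x_eq dx_cons.
set (al := c2 / (KP * KM)). set (e := exp (al * (t - t0))).
set (dV := bil n P dx (x t) + bil n P (x t) dx).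
exists (al * e * quad n P (x t) + e * dV). split.
{ apply (derivable_pt_lim_mult (fun s => exp (al * (s - t0))) (fun s => quad n P (x s)));
    [apply deriv_exp_affine|now apply deriv_quad]. }
assert (dV_le : dV <= - c2 * sqnorm n dx).
{ unfold dV. rewrite (RowMatrix.bil_solution n P M (x t) dx x_eq).
  pose proof (lyap_le dx) as h. unfold lyap_mat in h.
  rewrite quad_msub, quad_gram, sqnorm_eq0 in h by exact dx_cons. lra. }
assert (V_le : quad n P (x t) <= KP * KM * sqnorm n dx).
{ rewrite (quad_ext n P (x t) (mulmv n M dx) x_eq).
  eapply Rle_trans; [apply P_le|]. rewrite Rmult_assoc.
  apply Rmult_le_compat_l; [lra|apply M_le]. }
assert (al * quad n P (x t) <= c2 * sqnorm n dx).
{ replace (c2 * sqnorm n dx) with (al * (KP * KM * sqnorm n dx)) by (unfold al; field; lra).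
  apply Rmult_le_compat_l; [unfold al; apply Rlt_le, Rdiv_lt_0_compat; nra|exact V_le]. }
assert (0 < e) by apply exp_pos.
replace (al * e * quad n P (x t) + e * dV) with (e * (al * quad n P (x t) + dV)) by ring.
nra.
Qed.

Definition mode_const (sigma : R -> nat) (a b : R) : Prop :=
  forall s u, a < s < b -> a < u < b -> sigma s = sigma u.

Lemma not_between s u p : (p < s /\ p < u) \/ (s < p /\ u < p) -> ~ (Rmin s u <= p <= Rmax s u).
Proof. unfold Rmin, Rmax. destruct (Rle_dec s u); lra. Qed.

Lemma le_of_mode_intervals (W : R -> R) (sigma : R -> nat) t0 :
  (forall a b, t0 <= a -> a < b -> mode_const sigma a b -> W b <= W a) ->
  forall l a b, t0 <= a <= b ->
  (forall s u, a < s < b -> a < u < b ->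
     (forall q, List.In q l -> ~ (Rmin s u <= q <= Rmax s u)) -> sigma s = sigma u) ->
  W b <= W a.
Proof.
intros Wmode l. induction l as [|p l IH]; intros a b hab Hl.
- destruct (Req_dec a b) as [->|hne]; [lra|].
  apply Wmode; [lra|lra|]. intros s u hs hu. apply Hl; [exact hs|exact hu|intros q []].
- assert (Hsplit : forall a' b', a <= a' -> b' <= b -> ~ (a' < p < b') -> t0 <= a' <= b' ->
    W b' <= W a').
  { intros a' b' ha hb hp hab'. apply IH; [exact hab'|]. intros s u hs hu Hq.
    apply Hl; [lra|lra|]. intros q [<-|hq]; [apply not_between; lra|now apply Hq]. }
  destruct (classic (a < p < b)) as [hp|hp].
  + apply Rle_trans with (W p); apply Hsplit; lra.
  + apply Hsplit; lra.
Qed.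

Lemma right_gap (l : list R) t :
  exists d, 0 < d /\ d <= 1 /\ forall p, List.In p l -> ~ (t < p < t + d).
Proof.
induction l as [|p l [d [hd [hd1 H]]]].
- exists 1. split; [lra|split; [lra|]]. intros p [].
- destruct (Rlt_or_le t p) as [hp|hp].
  + exists (Rmin d (p - t)). pose proof (Rmin_l d (p - t)). pose proof (Rmin_r d (p - t)).
    split; [apply Rmin_pos; lra|split; [lra|]].
    intros q [<-|hq]; [lra|]. intros hc. apply (H q hq). lra.
  + exists d. split; [lra|split; [lra|]]. intros q [<-|hq]; [lra|now apply H].
Qed.

Lemma side_lim_weighted_quad sd t n Q (x : R -> vec) v al t0 :
  (forall j, (j < n)%nat -> side_lim sd t (fun s => x s j) (v j)) ->
  side_lim sd t (fun s => exp (al * (s - t0)) * quad n Q (x s)) (exp (al * (t - t0)) * quad n Q v).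
Proof.
intros xv. apply (side_lim_mult sd t (fun s => exp (al * (s - t0)))); [|now apply side_lim_quad].
apply (side_lim_continuous sd t (fun s => exp (al * (s - t0)))).
apply derivable_continuous_pt. eexists. apply deriv_exp_affine.
Qed.

Section SwitchedSolution.
Variables (n N : nat) (E A Ainv : nat -> mat) (m : nat -> nat) (C : nat -> mat).
Hypothesis Ainv_inverse : forall i, (1 <= i <= N)%nat -> is_inverse n (A i) (Ainv i).
Hypothesis cons_ker : forall i, (1 <= i <= N)%nat -> forall v : vec,
  in_cons n (mulmm n (Ainv i) (E i)) v <-> (forall r, (r < m i)%nat -> mulmv n (C i) v r = 0).
Variables (t0 : R) (sigma : R -> nat) (x : R -> vec).
Hypothesis sol : is_solution n N E A t0 sigma x.

Let M i := mulmm n (Ainv i) (E i).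

Definition mode_ode (i : nat) (a b : R) : Prop :=
  forall s, a < s < b -> exists dx : vec,
    (forall j, (j < n)%nat -> derivable_pt_lim (fun s => x s j) s (dx j)) /\
    (forall j, (j < n)%nat -> x s j = mulmv n (M i) dx j).

Lemma mode_interval_ode a b : t0 <= a -> a < b -> mode_const sigma a b ->
  exists i, (1 <= i <= N)%nat /\ mode_ode i a b.
Proof.
intros ha hab Hc. destruct sol as [[Hrange _] [Hode _]].
set (i := sigma ((a + b) / 2)). assert (hi : (1 <= i <= N)%nat) by (apply Hrange; lra).
exists i. split; [exact hi|]. intros s hs.
assert (Hsc : sigma_cont sigma s).
{ exists (Rmin (s - a) (b - s)). split; [apply Rmin_pos; lra|].
  intros s' hs'. apply Rabs_def2 in hs'.
  pose proof (Rmin_l (s - a) (b - s)). pose proof (Rmin_r (s - a) (b - s)).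
  apply Hc; lra. }
destruct (Hode s ltac:(lra) Hsc) as [dx [dxP Edx]].
rewrite (Hc s ((a + b) / 2)) in Edx by lra.
exists dx. split; [exact dxP|].
exact (RowMatrix.mulmv_inverse n _ _ _ (x s) dx (Ainv_inverse i hi) Edx).
Qed.

Lemma mode_ode_consistent i a b : (1 <= i <= N)%nat -> mode_ode i a b ->
  forall s, a < s < b -> forall r, (r < m i)%nat -> mulmv n (C i) (x s) r = 0.
Proof.
intros hi ode s hs.
destruct (proj2 (cons_ker i hi (fun _ => 0))) as [k [Hk _]].
{ intros r _. apply rsum_eq0. intros; ring. }
apply (cons_ker i hi (x s)). exists k. split; [exact Hk|].
exact (RowMatrix.solution_in_image n (M i) k a b x (proj1 Hk) ode s hs).
Qed.

Lemma solution_consistent t : t0 <= t ->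
  exists i, (1 <= i <= N)%nat /\ forall r, (r < m i)%nat -> mulmv n (C i) (x t) r = 0.
Proof.
intros ht. destruct sol as [[_ Hfin] [_ [_ Hright]]].
destruct (Hfin t (t + 1)) as [l Hl].
destruct (right_gap l t) as [d [hd [hd1 Hd]]].
assert (Hc : mode_const sigma t (t + d)).
{ intros s u hs hu. apply Hl; try lra.
  intros p hp [h1 h2]. apply (Hd p hp). unfold Rmin, Rmax in *. destruct (Rle_dec s u); lra. }
destruct (mode_interval_ode t (t + d) ht ltac:(lra) Hc) as [i [hi ode]].
exists i. split; [exact hi|]. intros r hr.
apply (side_lim_unique Right t (fun s => mulmv n (C i) (x s) r)).
- apply side_lim_mulmv, right_lim_side, Hright. lra.
- apply (side_lim_ext Right t (fun _ => 0)); [|apply side_lim_const].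
  exists d. split; [exact hd|]. intros s hs. symmetry.
  exact (mode_ode_consistent i t (t + d) hi ode s hs r hr).
Qed.

Variables (P : mat) (c2 KP KM : R).
Hypotheses (c2_pos : 0 < c2) (KP_pos : 0 < KP) (KM_pos : 0 < KM).
Hypothesis lyap_le : forall i, (1 <= i <= N)%nat ->
  forall v, quad n (lyap_mat n P (M i) (C i) (m i)) v <= - c2 * sqnorm n v.
Hypothesis P_le : forall v, quad n P v <= KP * sqnorm n v.
Hypothesis M_le : forall i, (1 <= i <= N)%nat ->
  forall v, sqnorm n (mulmv n (M i) v) <= KM * sqnorm n v.
Hypothesis jump : jump_nonincreasing n P t0 sigma x.

Let W s := exp (c2 / (KP * KM) * (s - t0)) * quad n P (x s).

Lemma quad_le_left_lim b v : t0 < b -> left_lim n x b v -> quad n P (x b) <= quad n P v.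
Proof.
intros hb xv. destruct sol as [_ [Hode _]].
destruct (classic (sigma_cont sigma b)) as [hc|hc]; [|exact (jump b hb hc v xv)].
destruct (Hode b hb hc) as [dx [dxP _]].
right. apply quad_ext. intros j hj.
apply (side_lim_unique Left b (fun s => x s j)); [|exact (left_lim_side n x b v xv j hj)].
apply side_lim_continuous, derivable_continuous_pt. exists (dx j). now apply dxP.
Qed.

Lemma weighted_mode_decrease a b : t0 <= a -> a < b -> mode_const sigma a b -> W b <= W a.
Proof.
intros ha hab Hc. destruct (mode_interval_ode a b ha hab Hc) as [i [hi ode]].
destruct sol as [_ [_ [Hleft Hright]]]. destruct (Hleft b ltac:(lra)) as [v xv].
apply Rle_trans with (exp (c2 / (KP * KM) * (b - t0)) * quad n P v).
{ apply Rmult_le_compat_l; [apply Rlt_le, exp_pos|apply quad_le_left_lim; [lra|exact xv]]. }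
apply (side_lim_le_of_deriv_nonpos W a b); [exact hab| | |].
- intros s hs. destruct (ode s hs) as [dx [dxP xdx]].
  apply (weighted_lyap_deriv_nonpos n P (M i) (C i) (m i) x dx s t0 c2 KP KM);
    auto using lyap_le, M_le.
  intros r hr. apply (deriv_zero_on (fun s => mulmv n (C i) (x s) r) a b s); [|exact hs|].
  + intros s' hs'. exact (mode_ode_consistent i a b hi ode s' hs' r hr).
  + now apply deriv_mulmv.
- apply side_lim_weighted_quad, right_lim_side, Hright. lra.
- apply side_lim_weighted_quad, (left_lim_side n x b v xv).
Qed.

Lemma lyapunov_decay t : t0 <= t ->
  exp (c2 / (KP * KM) * (t - t0)) * quad n P (x t) <= quad n P (x t0).
Proof.
intros ht. destruct sol as [[_ Hfin] _]. destruct (Hfin t0 t) as [l Hl].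
replace (quad n P (x t0)) with (W t0) by (unfold W; rewrite Rminus_diag, Rmult_0_r, exp_0; ring).
apply (le_of_mode_intervals W sigma t0 weighted_mode_decrease l); [lra|].
intros s u hs hu. apply Hl; lra.
Qed.

End SwitchedSolution.

Definition mopp (Q : mat) : mat := fun i j => - Q i j.

Lemma quad_mopp n Q v : quad n (mopp Q) v = - quad n Q v.
Proof.
transitivity (- 1 * quad n Q v); [|ring].
unfold quad, mopp. rewrite <- rsum_scal. apply rsum_ext; intros i _.
rewrite (rsum_ext n _ (fun j => - 1 * (Q i j * v j))) by (intros; ring).
rewrite rsum_scal. ring.
Qed.

Lemma negdef_coercive n Q :
  negdef n Q -> exists c, 0 < c /\ forall v, quad n Q v <= - c * sqnorm n v.
Proof.
intros HQ. destruct (posdef_coercive n (mopp Q)) as [c [hc Hc]].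
- intros v hv. rewrite quad_mopp. specialize (HQ v hv). lra.
- exists c. split; [exact hc|]. intros v. specialize (Hc v). rewrite quad_mopp in Hc. lra.
Qed.

Lemma posdef_gram_coercive_on_ker n m Q Cm : posdef n (madd Q (gram m Cm)) ->
  exists c, 0 < c /\ forall v, (forall r, (r < m)%nat -> mulmv n Cm v r = 0) ->
    c * sqnorm n v <= quad n Q v.
Proof.
intros HQ. destruct (posdef_coercive n _ HQ) as [c [hc Hc]].
exists c. split; [exact hc|]. intros v hv. specialize (Hc v).
rewrite quad_madd, quad_gram, (sqnorm_eq0 m) in Hc by exact hv. lra.
Qed.

Lemma euclid_norm_decay n (v0 v : vec) q0 q c1 KP al tau :
  0 < c1 -> 0 < KP -> c1 * sqnorm n v <= q -> exp (al * tau) * q <= q0 ->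
  q0 <= KP * sqnorm n v0 ->
  euclid_norm n v <= sqrt (KP / c1) * exp (- (al / 2) * tau) * euclid_norm n v0.
Proof.
intros hc1 hKP hv hq hv0.
pose proof (sqnorm_nonneg n v). pose proof (sqnorm_nonneg n v0).
assert (Hexp : exp (- (al / 2) * tau) = sqrt (exp (- al * tau))).
{ rewrite <- (sqrt_square (exp (- (al / 2) * tau))) by (left; apply exp_pos).
  rewrite <- exp_plus. f_equal. f_equal. field. }
assert (Hsq : sqnorm n v <= KP / c1 * exp (- al * tau) * sqnorm n v0).
{ assert (Hinv : exp (- al * tau) * exp (al * tau) = 1)
    by (rewrite <- exp_plus, <- exp_0; f_equal; ring).
  pose proof (exp_pos (- al * tau)). pose proof (exp_pos (al * tau)).
  apply Rmult_le_reg_l with c1; [exact hc1|].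
  replace (c1 * (KP / c1 * exp (- al * tau) * sqnorm n v0))
    with (exp (- al * tau) * (KP * sqnorm n v0)) by (field; lra).
  apply Rle_trans with (exp (- al * tau) * (exp (al * tau) * q)); [rewrite <- Rmult_assoc, Hinv; lra|].
  apply Rmult_le_compat_l; lra. }
unfold euclid_norm. fold (sqnorm n v) (sqnorm n v0).
rewrite Hexp, <- !sqrt_mult; [apply sqrt_le_1_alt; exact Hsq| | | |];
  try apply Rlt_le, Rdiv_lt_0_compat; try apply Rmult_le_pos; try apply Rlt_le, exp_pos; auto;
  apply Rlt_le, Rdiv_lt_0_compat; lra.
Qed.

Theorem corollary1 (n N : nat) (E A Ainv : nat -> mat) (m : nat -> nat)
    (C : nat -> mat) (P : mat) :
  (forall i, (1 <= i <= N)%nat -> is_inverse n (A i) (Ainv i)) ->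
  (forall i, (1 <= i <= N)%nat -> forall v : vec,
     in_cons n (mulmm n (Ainv i) (E i)) v <->
     (forall r, (r < m i)%nat -> mulmv n (C i) v r = 0)) ->
  symmetric n P ->
  (forall i, (1 <= i <= N)%nat -> posdef n (madd P (gram (m i) (C i)))) ->
  (forall i, (1 <= i <= N)%nat ->
     negdef n (msub (madd (mulmm n P (mulmm n (Ainv i) (E i)))
                          (mulmm n (tr (mulmm n (Ainv i) (E i))) P))
                    (gram (m i) (C i)))) ->
  exists beta alpha, 0 < beta /\ 0 < alpha /\
    forall (t0 : R) (sigma : R -> nat) (x : R -> vec),
      is_solution n N E A t0 sigma x ->
      jump_nonincreasing n P t0 sigma x ->
      forall t, t0 <= t ->
        euclid_norm n (x t) <= beta * exp (- alpha * (t - t0)) * euclid_norm n (x t0).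
Proof.
intros Ainv_inverse cons_ker _ P_pos lyap_neg.
set (M i := mulmm n (Ainv i) (E i)).
destruct (uniform_lower_const N (fun i c => forall v,
    (forall r, (r < m i)%nat -> mulmv n (C i) v r = 0) -> c * sqnorm n v <= quad n P v))
  as [c1 [hc1 P_ge]].
{ intros i c c' hc H v hv. specialize (H v hv). pose proof (sqnorm_nonneg n v). nra. }
{ intros i hi. exact (posdef_gram_coercive_on_ker n (m i) P (C i) (P_pos i hi)). }
destruct (uniform_lower_const N (fun i c => forall v,
    quad n (lyap_mat n P (M i) (C i) (m i)) v <= - c * sqnorm n v)) as [c2 [hc2 lyap_le]].
{ intros i c c' hc H v. specialize (H v). pose proof (sqnorm_nonneg n v). nra. }
{ intros i hi. exact (negdef_coercive n _ (lyap_neg i hi)). }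
destruct (uniform_upper_const N (fun i K => forall v,
    sqnorm n (mulmv n (M i) v) <= K * sqnorm n v)) as [KM [hKM M_le]].
{ intros i c c' hc H v. specialize (H v). pose proof (sqnorm_nonneg n v). nra. }
{ intros i _. destruct (quad_le_sqnorm n (gram n (M i))) as [K [hK H]].
  exists K. split; [exact hK|]. intros v. rewrite <- quad_gram. apply H. }
destruct (quad_le_sqnorm n P) as [KP [hKP P_le]].
set (al := c2 / (KP * KM)). assert (hal : 0 < al) by (apply Rdiv_lt_0_compat; nra).
exists (sqrt (KP / c1)), (al / 2).
split; [apply sqrt_lt_R0, Rdiv_lt_0_compat; lra|split; [lra|]].
intros t0 sigma x sol jump t ht.
destruct (solution_consistent n N E A Ainv m C Ainv_inverse cons_ker t0 sigma x sol t ht)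
  as [i [hi xt_cons]].
apply (euclid_norm_decay n (x t0) (x t) (quad n P (x t0)) (quad n P (x t)) c1 KP al).
- exact hc1.
- exact hKP.
- exact (P_ge i hi (x t) xt_cons).
- exact (lyapunov_decay n N E A Ainv m C Ainv_inverse cons_ker t0 sigma x sol P c2 KP KM
           hc2 hKP hKM lyap_le P_le M_le jump t ht).
- apply P_le.
Qed.
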